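(* In the setting below, let $g_P,g_P^l,g_P^u$ be as defined there with prediction windows $D_n$, and let $g_0,g_0^l,g_0^u$ denote the same functions with every $D_n$ replaced by $0$. Let $\phi_P^*=\min_{\lambda\ge0}g_P(\lambda)$, $\phi_0^*=\min_{\lambda\ge0}g_0(\lambda)$, let $\lambda_0^*$ be a minimizer of $g_0^l$ and $\lambda_P^*$ a minimizer of $g_P^l$ over $\lambda\ge0$. Then $$g_P^l(\lambda_P^* )-g_0^u(\lambda_P^* )\le\phi_P^*-\phi_0^*\le g_P^u(\lambda_0^* )-g_0^l(\lambda_0^* ).$$
   Context: $N$ users; $B>0$. User $n$ has arrival rate $a_n\ge0$, a probability vector $\boldsymbol\eta_n$ on its channel states, $\beta_n\ge0$, integers $\tau_n\ge1$, $D_n\ge0$, a Markov channel on $\{1,\dots,K_n\}$ with transition matrix $(P_n^{i,j})$, a finite set $\mathcal E\subset[0,\infty)$ containing $0$ and a positive element, and $\zeta_n(i,\cdot):\mathcal E\to[0,1]$ with $\zeta_n(i,0)=0$, $\zeta_n(i,e)>0$ for $e>0$, strictly increasing; states are totally ordered by $\zeta_n$ (for all $i,j$ either $\zeta_n(i,e)\ge\zeta_n(j,e)\ \forall e$ or $\le\ \forall e$), with $i_n^{\max}$, $i_n^{\min}$ states of maximal and minimal $\zeta_n(\cdot,e)$ for all $e$. For $\lambda\ge0$: $V_n(0,0,i)=0$, $V_n(0,\tau,i)=\max_{e\in\mathcal E}\{-\lambda e+\zeta_n(i,e)\beta_n+(1-\zeta_n(i,e))\sum_jP_n^{i,j}V_n(0,\tau-1,j)\}$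 for $1\le\tau\le\tau_n+D_n$; $V_n^l(0)=0$, $V_n^l(\tau)=\max_{e\in\mathcal E,e>0}\frac{1-[1-\zeta_n(i_n^{\min},e)]^{\tau}}{\zeta_n(i_n^{\min},e)}[-\lambda e+\zeta_n(i_n^{\min},e)\beta_n]$; $V_n^u(0)=0$, $V_n^u(\tau)=\sum_{z=1}^{\tau}\max_{e\in\mathcal E}\{-\lambda e+\zeta_n(i_n^{\max},e)(\beta_n-\max\{0,V_n^l(z-1)\})\}$ (all depending on $\lambda$). Then $g_P(\lambda)=\lambda B+\sum_n a_n\sum_i\eta_n^iV_n(0,\tau_n+D_n,i)$, $g_P^u(\lambda)=\lambda B+\sum_n a_n\min\{\beta_n,V_n^u(\tau_n+D_n)\}$, $g_P^l(\lambda)=\lambda B+\sum_n a_n\max\{0,V_n^l(\tau_n+D_n)\}$. $g_P$ ($g_0$) is the Lagrange dual function with perfect prediction (no prediction), and $\phi_P^*$ ($\phi_0^*$) the optimal weighted timely-throughput. *)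

From Stdlib Require Import Reals List.
Import ListNotations.
Open Scope R_scope.

Fixpoint sumR (n : nat) (f : nat -> R) : R :=
  match n with
  | O => 0
  | S m => sumR m f + f m
  end.

(* maximum of f over a (finite, nonempty) list; 0 on the empty list (never used) *)
Definition maxl (f : R -> R) (l : list R) : R :=
  match l with
  | nil => 0
  | e :: l' => fold_right (fun x acc => Rmax (f x) acc) (f e) l'
  end.

(* The data of the system. Users are indexed by n < N, channel states of
   user n by i < K n (states 0..K n - 1, i.e. {1..K_n} shifted). *)
Record System := {
  N : nat;
  B : R;
  a : nat -> R;
  eta : nat -> nat -> R;
  beta : nat -> R;
  tau : nat -> nat;
  K : nat -> nat;
  P : nat -> nat -> nat -> R;
  E : list R;
  zeta : nat -> nat -> R -> R;
  imax : nat -> nat;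
  imin : nat -> nat
}.

Definition wf (S : System) : Prop :=
  0 < B S /\
  (forall e, In e (E S) -> 0 <= e) /\ In 0 (E S) /\ (exists e, In e (E S) /\ 0 < e) /\
  forall n, (n < N S)%nat ->
    0 <= a S n /\ 0 <= beta S n /\ (1 <= tau S n)%nat /\ (1 <= K S n)%nat /\
    (forall i, (i < K S n)%nat -> 0 <= eta S n i) /\
    sumR (K S n) (eta S n) = 1 /\
    (forall i j, (i < K S n)%nat -> (j < K S n)%nat -> 0 <= P S n i j) /\
    (forall i, (i < K S n)%nat -> sumR (K S n) (P S n i) = 1) /\
    (forall i, (i < K S n)%nat ->
       zeta S n i 0 = 0 /\
       (forall e, In e (E S) -> 0 <= zeta S n i e <= 1) /\
       (forall e, In e (E S) -> 0 < e -> 0 < zeta S n i e) /\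
       (forall e1 e2, In e1 (E S) -> In e2 (E S) -> e1 < e2 ->
          zeta S n i e1 < zeta S n i e2)) /\
    (forall i j, (i < K S n)%nat -> (j < K S n)%nat ->
       (forall e, In e (E S) -> zeta S n i e >= zeta S n j e) \/
       (forall e, In e (E S) -> zeta S n i e <= zeta S n j e)) /\
    (imax S n < K S n)%nat /\ (imin S n < K S n)%nat /\
    (forall i e, (i < K S n)%nat -> In e (E S) ->
       zeta S n (imin S n) e <= zeta S n i e /\ zeta S n i e <= zeta S n (imax S n) e).

Fixpoint V (S : System) (n : nat) (lam : R) (t : nat) (i : nat) : R :=
  match t with
  | O => 0
  | Datatypes.S t' =>
      maxl (fun e => - lam * e + zeta S n i e * beta S n
                     + (1 - zeta S n i e) *
                         sumR (K S n) (fun j => P S n i j * V S n lam t' j))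
           (E S)
  end.

Definition Vl (S : System) (n : nat) (lam : R) (t : nat) : R :=
  match t with
  | O => 0
  | _ => maxl (fun e => let z := zeta S n (imin S n) e in
                        (1 - (1 - z) ^ t) / z * (- lam * e + z * beta S n))
              (filter (fun e => if Rlt_dec 0 e then true else false) (E S))
  end.

Definition Vu (S : System) (n : nat) (lam : R) (t : nat) : R :=
  sumR t (fun z0 => (* z = z0 + 1, so z - 1 = z0 *)
    maxl (fun e => - lam * e + zeta S n (imax S n) e *
                     (beta S n - Rmax 0 (Vl S n lam z0))) (E S)).

Definition g (S : System) (D : nat -> nat) (lam : R) : R :=
  lam * B S + sumR (N S) (fun n => a S n *
     sumR (K S n) (fun i => eta S n i * V S n lam (tau S n + D n) i)).

Definition gu (S : System) (D : nat -> nat) (lam : R) : R :=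
  lam * B S + sumR (N S) (fun n => a S n * Rmin (beta S n) (Vu S n lam (tau S n + D n))).

Definition gl (S : System) (D : nat -> nat) (lam : R) : R :=
  lam * B S + sumR (N S) (fun n => a S n * Rmax 0 (Vl S n lam (tau S n + D n))).

Definition D0 : nat -> nat := fun _ => O.

Definition is_min_value (f : R -> R) (phi : R) : Prop :=
  (exists l, 0 <= l /\ f l = phi) /\ (forall l, 0 <= l -> phi <= f l).

Definition is_minimizer (f : R -> R) (l0 : R) : Prop :=
  0 <= l0 /\ forall l, 0 <= l -> f l0 <= f l.

(* For every multiplier lam >= 0 the true value function of each user is squeezed
   between the explicit bounds: V_n^l is the value of spending a fixed effort e in
   every slot while the channel is permanently in its worst state, a feasible but
   suboptimal policy; V_n^u lets each slot succeed with the best-state probability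
   while discounting the remaining value only by the lower bound.  Hence
   g^l <= g <= g^u pointwise, for D and for D = 0 alike, and comparing the minima of
   g_P and g_0 at the minimizers of the lower bounds gives both inequalities. *)
From Stdlib Require Import Reals List Lra Psatz.
Open Scope R_scope.

Lemma fold_Rmax_ge (f : R -> R) b l :
  b <= fold_right (fun x acc => Rmax (f x) acc) b l /\
  forall y, In y l -> f y <= fold_right (fun x acc => Rmax (f x) acc) b l.
Proof.
  induction l as [|y l [IHb IHl]]; simpl; split; try lra; try (intros _ []).
  - eapply Rle_trans; [exact IHb | apply Rmax_r].
  - intros x [<- | Hx]; [apply Rmax_l |].
    eapply Rle_trans; [apply IHl; auto | apply Rmax_r].
Qed.

Lemma maxl_ge (f : R -> R) l x : In x l -> f x <= maxl f l.
Proof.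
  destruct l as [|e l]; [intros [] |]; simpl.
  destruct (fold_Rmax_ge f (f e) l) as [He Hl].
  intros [<- | Hx]; auto.
Qed.

Lemma maxl_le (f : R -> R) l c :
  l <> nil -> (forall x, In x l -> f x <= c) -> maxl f l <= c.
Proof.
  destruct l as [|e l]; [congruence |]; intros _ Hf; simpl.
  assert (Hfold : forall b, b <= c ->
            fold_right (fun x acc => Rmax (f x) acc) b l <= c).
  { intros b Hb; induction l as [|y l IH]; simpl; auto.
    apply Rmax_lub; [apply Hf; simpl; auto | apply IH].
    intros x [<- | Hx]; apply Hf; simpl; auto. }
  apply Hfold, Hf; simpl; auto.
Qed.

Lemma In_not_nil {A} (x : A) l : In x l -> l <> nil.
Proof. now intros Hx ->. Qed.

Lemma sumR_le n f h : (forall i, (i < n)%nat -> f i <= h i) -> sumR n f <= sumR n h.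
Proof.
  induction n as [|n IH]; simpl; intros Hfh; [lra |].
  apply Rplus_le_compat; [apply IH; intros; apply Hfh; lia | apply Hfh; lia].
Qed.

Lemma sumR_scal n c f : sumR n (fun i => c * f i) = c * sumR n f.
Proof. induction n as [|n IH]; simpl; [ring | rewrite IH; ring]. Qed.

Section ConvexCombination.

Variables (n : nat) (w f : nat -> R) (c : R).
Hypothesis w_ge0 : forall i, (i < n)%nat -> 0 <= w i.
Hypothesis w_sum1 : sumR n w = 1.

Lemma convex_comb_le :
  (forall i, (i < n)%nat -> f i <= c) -> sumR n (fun i => w i * f i) <= c.
Proof.
  intros Hf; apply Rle_trans with (sumR n (fun i => c * w i)).
  - apply sumR_le; intros i Hi; rewrite (Rmult_comm c).
    apply Rmult_le_compat_l; auto.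
  - rewrite sumR_scal, w_sum1; lra.
Qed.

Lemma convex_comb_ge :
  (forall i, (i < n)%nat -> c <= f i) -> c <= sumR n (fun i => w i * f i).
Proof.
  intros Hf; apply Rle_trans with (sumR n (fun i => c * w i)).
  - rewrite sumR_scal, w_sum1; lra.
  - apply sumR_le; intros i Hi; rewrite (Rmult_comm c).
    apply Rmult_le_compat_l; auto.
Qed.

End ConvexCombination.

Lemma pow_unit_interval x k : 0 <= x <= 1 -> 0 <= x ^ k <= 1.
Proof.
  intros Hx; induction k as [|k IH]; simpl; [lra |].
  split; [apply Rmult_le_pos; lra |].
  rewrite <- (Rmult_1_r 1); apply Rmult_le_compat; lra.
Qed.

Section UserValueBounds.

Variables (sy : System) (n : nat) (lam : R).

Notation Kn := (K sy n).
Notation zeta_n := (zeta sy n).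
Notation Pn := (P sy n).
Notation bn := (beta sy n).
Notation Vn := (V sy n lam).

Hypothesis lam_ge0 : 0 <= lam.
Hypothesis E_ge0 : forall e, In e (E sy) -> 0 <= e.
Hypothesis E_has0 : In 0 (E sy).
Hypothesis E_has_pos : exists e, In e (E sy) /\ 0 < e.
Hypothesis beta_ge0 : 0 <= bn.
Hypothesis P_ge0 : forall i j, (i < Kn)%nat -> (j < Kn)%nat -> 0 <= Pn i j.
Hypothesis P_sum1 : forall i, (i < Kn)%nat -> sumR Kn (Pn i) = 1.
Hypothesis zeta_at0 : forall i, (i < Kn)%nat -> zeta_n i 0 = 0.
Hypothesis zeta_unit : forall i e, (i < Kn)%nat -> In e (E sy) -> 0 <= zeta_n i e <= 1.
Hypothesis imin_lt : (imin sy n < Kn)%nat.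
Hypothesis zeta_imin_pos :
  forall e, In e (E sy) -> 0 < e -> 0 < zeta_n (imin sy n) e.
Hypothesis zeta_imin_imax : forall i e, (i < Kn)%nat -> In e (E sy) ->
  zeta_n (imin sy n) e <= zeta_n i e <= zeta_n (imax sy n) e.

Definition expected_next (t i : nat) : R := sumR Kn (fun j => Pn i j * Vn t j).

Lemma V_succ t i : Vn (Datatypes.S t) i =
  maxl (fun e => - lam * e + zeta_n i e * bn + (1 - zeta_n i e) * expected_next t i)
       (E sy).
Proof. reflexivity. Qed.

Lemma V_ge0 t i : (i < Kn)%nat -> 0 <= Vn t i.
Proof.
  revert i; induction t as [|t IH]; intros i Hi; [simpl; lra |].
  rewrite V_succ; eapply Rle_trans; [| apply (maxl_ge _ _ 0 E_has0)]; simpl.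
  rewrite zeta_at0 by exact Hi.
  assert (0 <= expected_next t i) by (apply convex_comb_ge; auto).
  lra.
Qed.

Lemma V_le_beta t i : (i < Kn)%nat -> Vn t i <= bn.
Proof.
  revert i; induction t as [|t IH]; intros i Hi; [simpl; lra |].
  rewrite V_succ; apply maxl_le; [exact (In_not_nil _ _ E_has0) |].
  intros e He.
  pose proof (zeta_unit i e Hi He); pose proof (E_ge0 e He).
  assert (Hnext : expected_next t i <= bn) by (apply convex_comb_le; auto).
  assert (0 <= lam * e) by (apply Rmult_le_pos; lra).
  assert ((1 - zeta_n i e) * expected_next t i <= (1 - zeta_n i e) * bn)
    by (apply Rmult_le_compat_l; lra).
  nra.
Qed.

(* The value of spending [e] in each of [t] slots while the channel stays in its
   worst state: the geometric sum of (1 - z)^k over k < t times the one-slot reward. *)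
Definition worst_state_value (e : R) (t : nat) : R :=
  let z := zeta_n (imin sy n) e in (1 - (1 - z) ^ t) / z * (- lam * e + z * bn).

Section FixedEffort.

Variable e : R.
Hypothesis e_in_E : In e (E sy).
Hypothesis e_pos : 0 < e.

Let z := zeta_n (imin sy n) e.

Lemma zeta_imin_unit : 0 < z <= 1.
Proof.
  pose proof (zeta_imin_pos e e_in_E e_pos).
  pose proof (zeta_unit (imin sy n) e imin_lt e_in_E).
  unfold z; lra.
Qed.

Lemma worst_state_value_0 : worst_state_value e 0 = 0.
Proof. unfold worst_state_value; simpl; unfold Rdiv; ring. Qed.

Lemma worst_state_value_succ t : worst_state_value e (Datatypes.S t) =
  - lam * e + z * bn + (1 - z) * worst_state_value e t.
Proof.
  pose proof zeta_imin_unit.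
  unfold worst_state_value; fold z; simpl; field; lra.
Qed.

Lemma worst_state_value_le_beta t : worst_state_value e t <= bn.
Proof.
  pose proof zeta_imin_unit.
  unfold worst_state_value; fold z.
  destruct (pow_unit_interval (1 - z) t) as [Hq0 Hq1]; [lra |].
  set (q := (1 - z) ^ t) in *.
  assert (0 <= (1 - q) / z * (lam * e)).
  { apply Rmult_le_pos; [| apply Rmult_le_pos; lra].
    apply Rmult_le_pos; [lra | left; apply Rinv_0_lt_compat; lra]. }
  replace ((1 - q) / z * (- lam * e + z * bn))
    with (- ((1 - q) / z * (lam * e)) + (1 - q) * bn) by (field; lra).
  assert (0 <= q * bn) by (apply Rmult_le_pos; lra).
  lra.
Qed.

(* The states of the true chain are at least as good as the worst one, and the
   gain [(zeta i e - z) (beta - w)] of being in state [i] is nonnegative. *)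
Lemma worst_state_value_le_V t i : (i < Kn)%nat -> worst_state_value e t <= Vn t i.
Proof.
  revert i; induction t as [|t IH]; intros i Hi.
  - rewrite worst_state_value_0; apply V_ge0; exact Hi.
  - rewrite worst_state_value_succ, V_succ.
    eapply Rle_trans; [| apply (maxl_ge _ _ e e_in_E)]; simpl.
    assert (Hnext : worst_state_value e t <= expected_next t i)
      by (apply convex_comb_ge; auto).
    pose proof (zeta_unit i e Hi e_in_E).
    pose proof (proj1 (zeta_imin_imax i e Hi e_in_E)) as Hworst; fold z in Hworst.
    pose proof (worst_state_value_le_beta t).
    assert ((1 - zeta_n i e) * worst_state_value e t
            <= (1 - zeta_n i e) * expected_next t i)
      by (apply Rmult_le_compat_l; lra).
    assert (0 <= (zeta_n i e - z) * (bn - worst_state_value e t))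
      by (apply Rmult_le_pos; lra).
    nra.
Qed.

End FixedEffort.

Lemma Vl_le_V t i : (i < Kn)%nat -> Vl sy n lam t <= Vn t i.
Proof.
  intros Hi; destruct t as [|t]; [apply V_ge0; exact Hi |].
  destruct E_has_pos as [e0 [He0 He0pos]].
  apply maxl_le.
  - apply (In_not_nil e0), filter_In; split; [exact He0 |].
    destruct (Rlt_dec 0 e0); [reflexivity | lra].
  - intros e He; apply filter_In in He as [He Hpos].
    destruct (Rlt_dec 0 e) as [Hepos |]; [| discriminate].
    exact (worst_state_value_le_V e He Hepos (Datatypes.S t) i Hi).
Qed.

Lemma V_le_Vu t i : (i < Kn)%nat -> Vn t i <= Vu sy n lam t.
Proof.
  revert i; induction t as [|t IH]; intros i Hi; [unfold Vu; simpl; lra |].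
  set (m := Rmax 0 (Vl sy n lam t)).
  change (Vu sy n lam (Datatypes.S t)) with (Vu sy n lam t +
    maxl (fun e => - lam * e + zeta_n (imax sy n) e * (bn - m)) (E sy)).
  rewrite V_succ; apply maxl_le; [exact (In_not_nil _ _ E_has0) |].
  intros e He.
  set (s := expected_next t i).
  assert (Hs_Vu : s <= Vu sy n lam t) by (apply convex_comb_le; auto).
  assert (Hs_beta : s <= bn) by (apply convex_comb_le; auto using V_le_beta).
  assert (Hm_s : m <= s).
  { apply Rmax_lub; apply convex_comb_ge; auto using V_ge0, Vl_le_V. }
  pose proof (maxl_ge (fun e => - lam * e + zeta_n (imax sy n) e * (bn - m))
                      (E sy) e He) as Hmax; simpl in Hmax.
  pose proof (zeta_unit i e Hi He).
  pose proof (proj2 (zeta_imin_imax i e Hi He)).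
  assert (zeta_n i e * (bn - s) <= zeta_n (imax sy n) e * (bn - s))
    by (apply Rmult_le_compat_r; lra).
  assert (zeta_n (imax sy n) e * (bn - s) <= zeta_n (imax sy n) e * (bn - m))
    by (apply Rmult_le_compat_l; lra).
  nra.
Qed.

Hypothesis eta_ge0 : forall i, (i < Kn)%nat -> 0 <= eta sy n i.
Hypothesis eta_sum1 : sumR Kn (eta sy n) = 1.

Lemma expected_V_between t :
  Rmax 0 (Vl sy n lam t) <= sumR Kn (fun i => eta sy n i * Vn t i)
  <= Rmin bn (Vu sy n lam t).
Proof.
  split.
  - apply Rmax_lub; apply convex_comb_ge; auto using V_ge0, Vl_le_V.
  - apply Rmin_glb; apply convex_comb_le; auto using V_le_beta, V_le_Vu.
Qed.

End UserValueBounds.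

Lemma g_between (sy : System) (D : nat -> nat) (lam : R) : wf sy -> 0 <= lam ->
  gl sy D lam <= g sy D lam <= gu sy D lam.
Proof.
  intros (_ & E_ge0 & E_has0 & E_has_pos & Huser) Hlam.
  unfold gl, g, gu; split; apply Rplus_le_compat_l, sumR_le; intros n Hn;
    destruct (Huser n Hn) as (Ha & Hbeta & _ & _ & Heta & Heta1 & HP & HP1 & Hzeta
                              & _ & _ & Himin & Hbounds);
    apply Rmult_le_compat_l; auto;
    apply (expected_V_between sy n lam); auto;
    intros; apply Hzeta; auto.
Qed.

Lemma min_value_le (f : R -> R) phi x : is_min_value f phi -> 0 <= x -> phi <= f x.
Proof. intros [_ Hmin]; apply Hmin. Qed.

Lemma minimizer_le_min_value (f fl : R -> R) phi l :
  (forall x, 0 <= x -> fl x <= f x) -> is_min_value f phi -> is_minimizer fl l ->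
  fl l <= phi.
Proof.
  intros Hle [[x [Hx <-]] _] [_ Hl].
  eapply Rle_trans; [apply Hl | apply Hle]; exact Hx.
Qed.

Theorem theorem8 (S : System) (D : nat -> nat)
  (phiP phi0 lamP lam0 : R) :
  wf S ->
  is_min_value (g S D) phiP ->
  is_min_value (g S D0) phi0 ->
  is_minimizer (gl S D0) lam0 ->
  is_minimizer (gl S D) lamP ->
  gl S D lamP - gu S D0 lamP <= phiP - phi0 <= gu S D lam0 - gl S D0 lam0.
Proof.
  intros Hwf HphiP Hphi0 Hlam0 HlamP.
  pose proof (proj1 Hlam0) as Hlam0_ge0; pose proof (proj1 HlamP) as HlamP_ge0.
  assert (Hlow : forall D', (forall x, 0 <= x -> gl S D' x <= g S D' x))
    by (intros D' x Hx; apply (g_between S D' x Hwf Hx)).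
  pose proof (minimizer_le_min_value _ _ _ _ (Hlow D) HphiP HlamP).
  pose proof (minimizer_le_min_value _ _ _ _ (Hlow D0) Hphi0 Hlam0).
  pose proof (min_value_le _ _ _ HphiP Hlam0_ge0).
  pose proof (min_value_le _ _ _ Hphi0 HlamP_ge0).
  pose proof (g_between S D lam0 Hwf Hlam0_ge0).
  pose proof (g_between S D0 lamP Hwf HlamP_ge0).
  lra.
Qed.
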